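(* For every $1\le i\le n$ and $1\le j\le n-1$, the elements $\tau_i$ and $\sigma_i$ of $\hat\Lambda$ are invariant under $s_j$ (exchange of $a_j$ and $a_{j+1}$ in the coefficients).
   Context: Fix $n\ge2$. $R(T)=\mathbb{Z}[e^{\pm a_1},\dots,e^{\pm a_n}]/(e^{a_1+\cdots+a_n}-1)$, $b_i=1-e^{-a_i}$. $\hat\Lambda$: symmetric formal power series in $y=(y_1,y_2,\dots)$ with coefficients in the fraction field of $R(T)$; $\Omega(b_i|y)=\prod_{j\ge1}(1-b_iy_j)^{-1}$. $Z=(z_{pq})$ is the $n\times n$ upper triangular matrix with $z_{pp}=\Omega(b_p|y)$ and $z_{pq}=\frac{z_{p,q-1}-z_{p+1,q}}{e^{-a_q}-e^{-a_p}}$ for $p<q$. $A$: upper triangular with diagonal $(e^{-a_1},\dots,e^{-a_n})$, $-1$ on the superdiagonal, $0$ elsewhere. $P$: lower unitriangular with $P_{pq}=e_{p-q}(e^{-a_1},\dots,e^{-a_{p-1}})$. $\sigma_i=\det(ZP)_{[1,i]}^{[1,i]}$, $\tau_i=\det(ZAP)_{[1,i]}^{[1,i]}$ (leading principal minors). *)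

From HB Require Import structures.
From mathcomp Require Import all_boot all_order all_algebra.
From mathcomp Require Import fraction.
From mathcomp Require Import mpoly.
Set Implicit Arguments. Unset Strict Implicit. Unset Printing Implicit Defensive.
Import GRing.Theory.
Local Open Scope ring_scope.

(* All indices below are 0-based: paper's index p (1 <= p <= n) is p-1 here.
   x k stands for e^{-a_{k+1}}, y k for y_{k+1}.
   The construction is written generically over any field F. *)
Section Construction.
Variable F : fieldType.

Definition bb (x : nat -> F) (p : nat) : F := 1 - x p.

Definition Om (m : nat) (x y : nat -> F) (p : nat) : F :=
  \prod_(k < m) (1 - bb x p * y k)^-1.

(* zd d p = z_{p, p+d} *)
Fixpoint zd (m : nat) (x y : nat -> F) (d p : nat) : F :=
  match d with
  | 0 => Om m x y p
  | d'.+1 => (zd m x y d' p - zd m x y d' p.+1) / (x (p + d'.+1)%N - x p)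
  end.

Definition Zm (m : nat) (x y : nat -> F) (p q : nat) : F :=
  if (p <= q)%N then zd m x y (q - p) p else 0.

Definition Am (x : nat -> F) (p q : nat) : F :=
  if p == q then x p else if q == p.+1 then -1 else 0.

Definition esymF (x : nat -> F) (k l : nat) : F :=
  \sum_(I : {set 'I_l} | #|I| == k) \prod_(i in I) x i.

Definition Pm (x : nat -> F) (p q : nat) : F :=
  if (q <= p)%N then esymF x (p - q) p else 0.

Definition mxmulN (n : nat) (M N : nat -> nat -> F) (p q : nat) : F :=
  \sum_(k < n) M p k * N k q.

Definition lead_minor (M : nat -> nat -> F) (i : nat) : F :=
  \det (\matrix_(r < i, c < i) M r c).

Definition sigmaF (n m : nat) (x y : nat -> F) (i : nat) : F :=
  lead_minor (mxmulN n (Zm m x y) (Pm x)) i.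

Definition tauF (n m : nat) (x y : nat -> F) (i : nat) : F :=
  lead_minor (mxmulN n (mxmulN n (Zm m x y) (Am x)) (Pm x)) i.

(* s_j (1-based j): exchange of a_j and a_{j+1}, i.e. of x_{j-1} and x_j *)
Definition swapx (j : nat) (x : nat -> F) (k : nat) : F :=
  if k == j.-1 then x j else if k == j then x j.-1 else x k.
End Construction.

(* The generic field: Frac(R(T)) (y_1..y_m) = Q(x_1..x_{n-1}, y_1..y_m),
   realized as the fraction field of {mpoly int[(n-1)+m]}. *)
Definition GF (n m : nat) := {fraction {mpoly int[n.-1 + m]}}.

Definition mvar (N : nat) (k : nat) : {mpoly int[N]} :=
  if insub k is Some i then 'X_i else 0.

(* generic x: x_k = e^{-a_{k+1}} is the variable k for k < n-1, and
   x_{n-1} = (x_0 ... x_{n-2})^{-1}, enforcing e^{a_1+...+a_n} = 1 *)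
Definition genx (n m : nat) (k : nat) : GF n m :=
  if (k < n.-1)%N then FracField.tofrac (mvar (n.-1 + m) k)
  else (\prod_(l < n.-1) FracField.tofrac (mvar (n.-1 + m) l))^-1.

Definition geny (n m : nat) (k : nat) : GF n m :=
  FracField.tofrac (mvar (n.-1 + m) (n.-1 + k)).

(* Write x' for x with x_j and x_(j+1) exchanged and L = 1 + (x_(j+1) - x_j) E_(j+1,j),
   a lower unitriangular shear.  Then P(x') = L P(x) (the recurrence of the e_k in
   their last variable, plus their symmetry), A(x') L = L A(x) by direct computation,
   and Z(x') L = L Z(x).  Hence Z(x') P(x') = L Z(x) P(x) and
   Z(x') A(x') P(x') = L Z(x) A(x) P(x), and left multiplication by a lower
   unitriangular matrix does not change leading principal minors.

   For Z: the recurrence defining Z says that Z(x) commutes with A(x) when the x_p are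
   distinct, so Y = Z(x') L - L Z(x) satisfies Y A(x) = A(x') Y.  This forces Y = 0
   once Y vanishes on and below the diagonal and at the single entry (j, j+1) where
   x_q = x'_p, which is checked by hand.  Distinctness of the generic x_k is all that
   is used about them. *)

From mathcomp Require Import all_boot all_algebra perm.
From mathcomp Require Import fraction.
From mathcomp Require Import mpoly.
From mathcomp Require Import ring zify.
Set Implicit Arguments. Unset Strict Implicit. Unset Printing Implicit Defensive.
Import GRing.Theory.
Local Open Scope ring_scope.

Section EntryMatrices.
Variables (F : fieldType) (n : nat).
Implicit Types (x : nat -> F) (f g L M : nat -> nat -> F).

Definition mxn f : 'M[F]_n := \matrix_(p < n, q < n) f p q.

Lemma eq_mxn f g : (forall p q, p < n -> q < n -> f p q = g p q)%N -> mxn f = mxn g.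
Proof. by move=> e; apply/matrixP => p q; rewrite !mxE e. Qed.

Lemma mxnP f g : mxn f = mxn g -> forall p q, (p < n -> q < n -> f p q = g p q)%N.
Proof.
by move=> /matrixP e p q hp hq; have := e (Ordinal hp) (Ordinal hq); rewrite !mxE.
Qed.

Lemma mxn_mul L M : mxn (mxmulN n L M) = mxn L *m mxn M.
Proof. by apply/matrixP => p q; rewrite !mxE; apply: eq_bigr => k _; rewrite !mxE. Qed.

Lemma mxnB f g : mxn f - mxn g = mxn (fun p q => f p q - g p q).
Proof. by apply/matrixP => p q; rewrite !mxE. Qed.

Lemma sum_delta (a : nat) (h : nat -> F) :
  \sum_(k < n) (a == k)%:R * h k = (a < n)%:R * h a.
Proof.
transitivity (\sum_(k < n | k == a :> nat) h k).
  rewrite [RHS]big_mkcond; apply: eq_bigr => k _.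
  by rewrite eq_sym; case: eqP; rewrite ?mul1r ?mul0r.
by rewrite big_ord1_eq; case: ltnP; rewrite ?mul1r ?mul0r.
Qed.

Lemma lead_minor_mxn f g i : (i <= n)%N -> mxn f = mxn g -> lead_minor f i = lead_minor g i.
Proof.
move=> hi /mxnP e; rewrite /lead_minor; congr (\det _).
by apply/matrixP => r c; rewrite !mxE e // (leq_trans (ltn_ord _) hi).
Qed.

Lemma lead_minor_unitrig_mul L M i : (i <= n)%N ->
  (forall p q, (p < q)%N -> L p q = 0) -> (forall p, L p p = 1) ->
  lead_minor (mxmulN n L M) i = lead_minor M i.
Proof.
move=> hi L_trig L_diag; rewrite /lead_minor.
have -> : \matrix_(r < i, c < i) mxmulN n L M r c =
          \matrix_(r < i, c < i) L r c *m \matrix_(r < i, c < i) M r c.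
  apply/matrixP => r c; rewrite !mxE /mxmulN (bigID (fun k : 'I_n => k < i)%N) /=.
  rewrite [X in _ + X]big1 ?addr0 => [|k]; last first.
    by rewrite -leqNgt => /(leq_trans (ltn_ord r)) /L_trig ->; rewrite mul0r.
  by rewrite -(big_ord_widen _ (fun k => L r k * M k c)) //; apply: eq_bigr => k _; rewrite !mxE.
rewrite det_mulmx det_trig ?big1 ?mul1r => [//|r _|]; first by rewrite mxE L_diag.
by apply/is_trig_mxP => r c rc; rewrite mxE L_trig.
Qed.

Definition shear (s t : nat) (d : F) (p q : nat) : F :=
  (p == q)%:R + ((p == t) && (q == s))%:R * d.

Lemma shear_lt s t d p q :
  (s < t)%N -> (p < q)%N -> shear s t d p q = 0.
Proof.
move=> st pq; rewrite /shear (ltn_eqF pq) add0r.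
case: (eqVneq p t) => [ept|]; case: (eqVneq q s) => [eqs|] /=; rewrite ?mul0r //.
by exfalso; lia.
Qed.

Lemma shear_diag s t d p : (s < t)%N -> shear s t d p p = 1.
Proof.
move=> st; rewrite /shear eqxx; case: (eqVneq p t) => [->|] /=; last by rewrite mul0r addr0.
by rewrite (gtn_eqF st) mul0r addr0.
Qed.

Lemma lead_minor_shear_mul s t d M i : (s < t)%N -> (i <= n)%N ->
  lead_minor (mxmulN n (shear s t d) M) i = lead_minor M i.
Proof.
move=> st hi; apply: lead_minor_unitrig_mul hi _ _ => [p q|p].
  exact: shear_lt.
exact: shear_diag.
Qed.

Lemma mul_shear_mx s t d M : (s < n)%N ->
  mxn (shear s t d) *m mxn M = mxn (fun p q => M p q + (p == t)%:R * d * M s q).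
Proof.
move=> hs; apply/matrixP => p q; rewrite !mxE.
transitivity (\sum_(k < n)
  ((p == k :> nat)%:R * M k q + (s == k)%:R * ((p == t :> nat)%:R * d * M s q))).
  apply: eq_bigr => k _; rewrite !mxE /shear mulrDl; congr (_ + _).
  by case: (eqVneq s k) => [<-|_]; rewrite ?andbT ?andbF ?mul1r ?mul0r.
by rewrite big_split /= (sum_delta p (M^~ q)) (sum_delta s (fun=> _)) ltn_ord hs !mul1r.
Qed.

Lemma mul_mx_shear s t d M : (t < n)%N ->
  mxn M *m mxn (shear s t d) = mxn (fun p q => M p q + (q == s)%:R * d * M p t).
Proof.
move=> ht; apply/matrixP => p q; rewrite !mxE.
transitivity (\sum_(k < n)
  ((q == k :> nat)%:R * M p k + (t == k)%:R * ((q == s :> nat)%:R * d * M p t))).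
  apply: eq_bigr => k _; rewrite !mxE /shear mulrDr [_ * _%:R]mulrC eq_sym; congr (_ + _).
  by case: (eqVneq t k) => [<-|_]; rewrite ?mul0r ?mulr0 ?mul1r // mulrC.
by rewrite big_split /= (sum_delta q (M p)) (sum_delta t (fun=> _)) ltn_ord ht !mul1r.
Qed.

Lemma AmE x p q : Am x p q = (p == q)%:R * x p - (q == p.+1)%:R.
Proof.
rewrite /Am; case: (eqVneq p q) => [<-|_]; first by rewrite (ltn_eqF (ltnSn p)) mul1r subr0.
by case: eqP; rewrite mul0r sub0r ?oppr0.
Qed.

Lemma mul_mx_Am x M :
  mxn M *m mxn (Am x) = mxn (fun p q => M p q * x q - (0 < q)%:R * M p q.-1).
Proof.
apply/matrixP => p q; rewrite !mxE.
transitivity (\sum_(k < n)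
  ((q == k :> nat)%:R * (M p k * x k) - (0 < q)%:R * ((q.-1 == k)%:R * M p k))).
  apply: eq_bigr => k _; rewrite !mxE AmE mulrBr eq_sym mulrCA.
  case: (nat_of_ord q) => [|q'] /=; rewrite ?mulr0 ?mul0r //.
  by rewrite mul1r [_ * (_ == _.+1)%:R]mulrC.
rewrite sumrB -mulr_sumr (sum_delta q (fun k => M p k * x k)) (sum_delta q.-1 (M p)).
by rewrite ltn_ord (leq_ltn_trans (leq_pred q) (ltn_ord q)) !mul1r.
Qed.

Lemma mul_Am_mx x M :
  mxn (Am x) *m mxn M = mxn (fun p q => x p * M p q - (p.+1 < n)%:R * M p.+1 q).
Proof.
apply/matrixP => p q; rewrite !mxE.
transitivity (\sum_(k < n) ((p == k :> nat)%:R * (x p * M k q) - (p.+1 == k)%:R * M k q)).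
  by apply: eq_bigr => k _; rewrite !mxE AmE mulrBl -mulrA [_ == p.+1]eq_sym.
rewrite sumrB (sum_delta p (fun k => x p * M k q)) (sum_delta p.+1 (M^~ q)).
by rewrite ltn_ord mul1r.
Qed.

End EntryMatrices.

Section Intertwiner.
Variables (F : fieldType) (n : nat).

(* Read entrywise, the hypothesis is Y_pq (x_q - x'_p) = Y_p(q-1) - Y_(p+1)q for p < q,
   which propagates zeros away from the diagonal. *)
Lemma Am_intertwiner_eq0 (x x' : nat -> F) (Y : nat -> nat -> F) :
  mxn n Y *m mxn n (Am x) = mxn n (Am x') *m mxn n Y ->
  (forall p q, (q <= p < n)%N -> Y p q = 0) ->
  (forall p q, (p < q < n)%N -> x q = x' p -> Y p q = 0) ->
  mxn n Y = 0.
Proof.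
rewrite mul_mx_Am mul_Am_mx => /mxnP YA Y_lower Y_degen.
suff Y_band k p q : (q - p <= k)%N -> (p < n)%N -> (q < n)%N -> Y p q = 0.
  by apply/matrixP => p q; rewrite !mxE (Y_band (q - p)%N) ?ltn_ord.
elim: k p q => [|k IH] p q hk hp hq.
  by apply: Y_lower; rewrite hp andbT -subn_eq0 -leqn0.
have [qp|pq] := leqP q p; first by apply: Y_lower; rewrite qp.
have [e|ne] := eqVneq (x q) (x' p); first by apply: Y_degen; rewrite ?pq.
have := YA p q hp hq; rewrite (leq_ltn_trans (leq0n p) pq) (leq_ltn_trans pq hq) !mul1r.
rewrite (IH p q.-1) ?(IH p.+1 q) ?(leq_ltn_trans (leq_pred q) hq) ?(leq_ltn_trans pq hq) //;
  [|lia..].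
move=> /eqP; rewrite !subr0 mulrC -subr_eq0 -mulrBl mulf_eq0 subr_eq0 (negPf ne) /=.
by move/eqP.
Qed.

End Intertwiner.

Section DividedDifferenceMatrix.
Variables (F : fieldType) (m : nat) (x y : nat -> F).

Lemma Zm_lt p q : (q < p)%N -> Zm m x y p q = 0.
Proof. by move=> qp; rewrite /Zm leqNgt qp. Qed.

Lemma Zm_diag p : Zm m x y p p = Om m x y p.
Proof. by rewrite /Zm leqnn subnn. Qed.

Lemma Zm_subdiag p : Zm m x y p p.+1 = (Om m x y p - Om m x y p.+1) / (x p.+1 - x p).
Proof. by rewrite /Zm leqnSn subSnn /= addn1. Qed.

Lemma Zm_rec p q : (p < q)%N -> x q != x p ->
  Zm m x y p q * (x q - x p) = Zm m x y p q.-1 - Zm m x y p.+1 q.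
Proof.
move=> pq xqp; have e : (q - p = (q - p.+1).+1)%N by lia.
rewrite /Zm ltnW // e /= (_ : p + _ = q)%N; last by lia.
rewrite divfK ?subr_eq0 // pq -ltnS (ltn_predK pq) pq (_ : q.-1 - p = q - p.+1)%N //.
lia.
Qed.

Lemma Zm_Am_comm n : {in gtn n &, injective x} ->
  mxn n (Zm m x y) *m mxn n (Am x) = mxn n (Am x) *m mxn n (Zm m x y).
Proof.
move=> x_inj; rewrite mul_mx_Am mul_Am_mx; apply: eq_mxn => p q hp hq.
have [pq|qp|<-] := ltngtP p q.
- rewrite (leq_ltn_trans (leq0n p) pq) (leq_ltn_trans pq hq) !mul1r.
  have xqp : x q != x p by apply: contraTneq pq => /(x_inj _ _ hq hp) ->; rewrite ltnn.
  rewrite -[Zm m x y p q.-1](subrK (Zm m x y p.+1 q)) -(Zm_rec pq xqp); ring.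
- by rewrite !Zm_lt; [ring|lia..].
- rewrite (Zm_lt (ltnSn p)); case: p {hp hq} => [|p] /=; rewrite ?(Zm_lt (ltnSn p)); ring.
Qed.

End DividedDifferenceMatrix.

Definition swapn (s k : nat) : nat := if k == s then s.+1 else if k == s.+1 then s else k.

Lemma swapnK s : involutive (swapn s).
Proof.
move=> k; rewrite /swapn.
case: (eqVneq k s) => [->|ks]; first by rewrite (gtn_eqF (ltnSn s)) eqxx.
by case: (eqVneq k s.+1) => [->|ks1]; rewrite ?eqxx // (negPf ks) (negPf ks1).
Qed.

Lemma swapn_lt s n k : (s.+1 < n)%N -> (k < n)%N -> (swapn s k < n)%N.
Proof. by rewrite /swapn => sn kn; case: ifP => // _; case: ifP => // _; apply: ltnW. Qed.

Lemma swapx_swapn (F : fieldType) s (x : nat -> F) k : swapx s.+1 x k = x (swapn s k).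
Proof. by rewrite /swapx /swapn /=; case: ifP => // _; case: ifP. Qed.

Lemma swapn_gt s k : (k < swapn s k)%N -> k = s.
Proof. by rewrite /swapn; case: eqP => // _; case: eqP => [->|_]; lia. Qed.

Lemma tperm_swapn l s (hs : (s < l)%N) (hs1 : (s.+1 < l)%N) (i : 'I_l) :
  tperm (Ordinal hs) (Ordinal hs1) i = swapn s i :> nat.
Proof.
rewrite /swapn; case: tpermP => [->|->|ne_s ne_s1] /=; rewrite ?eqxx ?(gtn_eqF (ltnSn s)) //.
case: eqP => [e|_]; first by case: ne_s; apply: val_inj.
by case: eqP => // e; case: ne_s1; apply: val_inj.
Qed.

Section ElementarySymmetric.
Variable F : fieldType.
Implicit Types x : nat -> F.

Lemma eq_esymF x x' k l : (forall i, (i < l)%N -> x' i = x i) -> esymF x' k l = esymF x k l.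
Proof. by move=> e; apply: eq_bigr => I _; apply: eq_bigr => i _; rewrite e. Qed.

Lemma esymF0 x l : esymF x 0 l = 1.
Proof.
rewrite /esymF (eq_bigl (pred1 set0)) => [|I]; last by rewrite /= cards_eq0.
by rewrite big_pred1_eq big_set0.
Qed.

Lemma esymF_coef x k l : (k <= l)%N ->
  esymF x k l = (-1) ^+ k * (\prod_(i < l) ('X - (x i)%:P))`_(l - k).
Proof.
move=> kl; have := @coef_prod_XsubC _ (map x (iota 0 l)) (l - k).
rewrite size_map size_iota subKn // => /(_ (leq_subr _ _)).
rewrite big_map -(subn0 l) -/(index_iota 0 l) big_mkord subn0 => ->.
rewrite signrMK; apply: eq_big => [I //|I _]; apply: eq_bigr => i _.
by rewrite /index_iota subn0 (nth_map 0) ?size_iota // nth_iota.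
Qed.

Lemma esymF_change_last x x' k l : (k <= l)%N -> (forall i, (i < l)%N -> x' i = x i) ->
  esymF x' k.+1 l.+1 = esymF x k.+1 l.+1 + (x' l - x l) * esymF x k l.
Proof.
move=> kl e; rewrite !esymF_coef // !big_ord_recr /= subSS.
rewrite (eq_bigr (fun i : 'I_l => 'X - (x i)%:P)) => [|i _]; last by rewrite e.
set Q := \prod_(i < l) _.
have -> : 'X - (x' l)%:P = 'X - (x l)%:P - (x' l - x l)%:P by rewrite rmorphB /=; ring.
rewrite mulrBr coefB coefMC exprS; ring.
Qed.

Lemma esymF_swap x s k l : (s.+1 < l)%N -> (k <= l)%N ->
  esymF (swapx s.+1 x) k l = esymF x k l.
Proof.
move=> sl kl; rewrite !esymF_coef //; congr (_ * (_)`_ _).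
rewrite (reindex_inj (@perm_inj _ (tperm (Ordinal (ltnW sl)) (Ordinal sl)))).
rewrite (eq_bigr (fun i : 'I_l => 'X - (x i)%:P)) // => i _.
by rewrite swapx_swapn tperm_swapn swapnK.
Qed.

End ElementarySymmetric.

Section AdjacentTransposition.
Variables (F : fieldType) (n m s : nat) (x y : nat -> F).
Hypothesis s_lt : (s.+1 < n)%N.
Let s_lt_n : (s < n)%N := ltnW s_lt.

Local Notation x' := (swapx s.+1 x).
Local Notation d := (x s.+1 - x s).
Local Notation L := (shear s s.+1 (x s.+1 - x s)).

Lemma swapx_below k : (k < s)%N -> x' k = x k.
Proof.
by move=> ks; rewrite swapx_swapn /swapn (ltn_eqF ks) (ltn_eqF (ltn_trans ks (ltnSn s))).
Qed.

Lemma swapx_s : x' s = x s.+1.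
Proof. by rewrite swapx_swapn /swapn eqxx. Qed.

Lemma swapx_s1 : x' s.+1 = x s.
Proof. by rewrite swapx_swapn /swapn (gtn_eqF (ltnSn s)) eqxx. Qed.

Lemma Pm_swap_row q : Pm x' s.+1 q = Pm x s.+1 q + d * Pm x s q.
Proof.
rewrite /Pm; have [qs|sq] := leqP q s.
  by rewrite (leqW qs) subSn // (esymF_change_last (leq_subr q s) swapx_below) swapx_s.
rewrite mulr0 addr0; case: leqP => // qs1.
have -> : q = s.+1 by apply/eqP; rewrite eqn_leq qs1 sq.
by rewrite subnn !esymF0.
Qed.

Lemma Pm_swap : mxn n (Pm x') = mxn n L *m mxn n (Pm x).
Proof.
rewrite mul_shear_mx //; apply: eq_mxn => p q _ _.
have [ps|sp|->] := ltngtP p s.+1; last by rewrite mul1r Pm_swap_row.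
- rewrite !mul0r addr0 /Pm; case: leqP => // _.
  by apply: eq_esymF => i ip; apply: swapx_below; apply: leq_trans ip _.
- by rewrite !mul0r addr0 /Pm; case: leqP => // _; apply: esymF_swap; rewrite ?leq_subr.
Qed.

Lemma Am_swap : mxn n (Am x') *m mxn n L = mxn n L *m mxn n (Am x).
Proof.
rewrite mul_mx_shear // mul_shear_mx //; apply: eq_mxn => p q _ _.
rewrite !AmE swapx_swapn /swapn.
have [->|ps] := eqVneq p s.
  rewrite (ltn_eqF (ltnSn s)) [s == q]eq_sym.
  by case: (eqVneq q s) => [->|_] /=; rewrite ?eqxx /=; ring.
have [->|ps1] := eqVneq p s.+1.
  rewrite [s.+1 == q]eq_sym.
  by case: (eqVneq q s) => [->|_] /=; rewrite ?eqxx ?(ltn_eqF (ltnSn _)) /=; ring.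
by rewrite eqSS (eq_sym s p) (negPf ps) /=; ring.
Qed.

Hypothesis x_inj : {in gtn n &, injective x}.

Lemma swapx_inj : {in gtn n &, injective x'}.
Proof.
move=> a b ha hb; rewrite !swapx_swapn => /(x_inj (swapn_lt s_lt ha) (swapn_lt s_lt hb)).
exact: (can_inj (swapnK s)).
Qed.

Lemma swapx_gap_neq0 : x s.+1 - x s != 0.
Proof. by rewrite subr_eq0; apply/eqP => /(x_inj s_lt s_lt_n) /esym /n_Sn. Qed.

Lemma Om_swap p : Om m x' y p = Om m x y (swapn s p).
Proof. by rewrite /Om /bb swapx_swapn. Qed.

Lemma Zm_swap_subdiag : Zm m x' y s s.+1 = Zm m x y s s.+1.
Proof.
rewrite !Zm_subdiag !Om_swap /swapn eqxx (gtn_eqF (ltnSn s)) eqxx swapx_s swapx_s1.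
by rewrite -opprB -[x s - _]opprB invrN mulrNN.
Qed.

Lemma Zm_swap_shear_lower p q : (q <= p)%N ->
  Zm m x' y p q + (q == s)%:R * d * Zm m x' y p s.+1 =
  Zm m x y p q + (p == s.+1)%:R * d * Zm m x y s q.
Proof.
rewrite leq_eqVlt => /orP[/eqP <-|qp].
  rewrite !Zm_diag Om_swap /swapn.
  have [->|qs] := eqVneq q s.
    rewrite (ltn_eqF (ltnSn s)) Zm_subdiag !Om_swap /swapn eqxx (gtn_eqF (ltnSn s)) eqxx.
    rewrite swapx_s swapx_s1 mul1r !mul0r addr0; field.
    by rewrite -opprB oppr_eq0 swapx_gap_neq0.
  have [->|qs1] := eqVneq q s.+1.
    by rewrite Zm_subdiag !mul0r mul1r addr0 mulrC divfK ?swapx_gap_neq0 // addrC subrK.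
  by rewrite !mul0r.
rewrite (Zm_lt m x' y qp) (Zm_lt m x y qp) !add0r.
have [qs|qs] := eqVneq q s; first subst q.
  have [->|ps1] := eqVneq p s.+1.
    by rewrite !Zm_diag Om_swap /swapn (gtn_eqF (ltnSn s)) eqxx.
  by rewrite Zm_lt ?mulr0 ?mul0r // ltn_neqAle eq_sym ps1 qp.
have [ps1|] := eqVneq p s.+1; last by rewrite !mul0r.
by rewrite (Zm_lt m x y) ?mulr0 ?mul0r // ltn_neqAle qs -ltnS -ps1.
Qed.

Lemma Zm_swap : mxn n (Zm m x' y) *m mxn n L = mxn n L *m mxn n (Zm m x y).
Proof.
pose Y p q := Zm m x' y p q + (q == s)%:R * d * Zm m x' y p s.+1 -
              (Zm m x y p q + (p == s.+1)%:R * d * Zm m x y s q).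
have YE : mxn n (Zm m x' y) *m mxn n L - mxn n L *m mxn n (Zm m x y) = mxn n Y.
  by rewrite mul_mx_shear // mul_shear_mx // mxnB.
apply/eqP; rewrite -subr_eq0 YE; apply/eqP/(Am_intertwiner_eq0 (x := x) (x' := x')).
- rewrite -YE mulmxBl mulmxBr -!mulmxA -Am_swap (Zm_Am_comm m y x_inj) !mulmxA.
  by rewrite (Zm_Am_comm m y swapx_inj) -Am_swap.
- by move=> p q /andP[qp _]; rewrite /Y Zm_swap_shear_lower ?subrr.
move=> p q /andP[pq qn]; rewrite swapx_swapn.
move=> /(x_inj qn (swapn_lt s_lt (ltn_trans pq qn))) q_eq.
move: pq; rewrite q_eq => /swapn_gt ->; rewrite /swapn eqxx.
by rewrite /Y Zm_swap_subdiag (gtn_eqF (ltnSn s)) (ltn_eqF (ltnSn s)) !mul0r subrr.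
Qed.

Lemma sigmaF_swap i : (i <= n)%N -> sigmaF n m x' y i = sigmaF n m x y i.
Proof.
move=> hi; rewrite /sigmaF -[RHS](lead_minor_shear_mul d _ (ltnSn s) hi).
by apply: lead_minor_mxn hi _; rewrite !mxn_mul Pm_swap !mulmxA Zm_swap.
Qed.

Lemma tauF_swap i : (i <= n)%N -> tauF n m x' y i = tauF n m x y i.
Proof.
move=> hi; rewrite /tauF -[RHS](lead_minor_shear_mul d _ (ltnSn s) hi).
apply: lead_minor_mxn hi _; rewrite !mxn_mul Pm_swap !mulmxA.
by rewrite -(mulmxA _ (mxn n (Am x'))) Am_swap mulmxA Zm_swap.
Qed.

End AdjacentTransposition.

Section MpolyVariables.
Variables (R : comNzRingType) (N : nat).

Lemma mpolyX_neq (i j : 'I_N) : i != j -> ('X_i : {mpoly R[N]}) != 'X_j.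
Proof.
move=> ij; apply/eqP => /(congr1 (meval (fun k => ((k == i)%:R : R)))).
by rewrite !mevalXU eqxx eq_sym (negPf ij); apply/eqP; rewrite oner_neq0.
Qed.

Lemma mpolyX_neq0 (i : 'I_N) : ('X_i : {mpoly R[N]}) != 0.
Proof.
apply/eqP => /(congr1 (meval (fun=> 1))).
by rewrite mevalXU raddf0; apply/eqP; rewrite oner_neq0.
Qed.

Lemma mpolyX_mul_neq1 (i : 'I_N) (P : {mpoly R[N]}) : 'X_i * P != 1.
Proof.
apply/eqP => /(congr1 (meval (fun=> 0))).
by rewrite mevalM mevalXU mul0r meval1; apply/eqP; rewrite eq_sym oner_neq0.
Qed.

End MpolyVariables.

Lemma mvarE N k (h : (k < N)%N) : mvar N k = 'X_(Ordinal h).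
Proof.
rewrite /mvar; case: insubP => [i _ hi|]; last by rewrite h.
by congr 'X_ _; apply: val_inj.
Qed.

Lemma genx_inj n m : (2 <= n)%N -> {in gtn n &, injective (genx n m)}.
Proof.
move=> n2.
suff genx_neq a b : (a < b < n)%N -> genx n m a != genx n m b.
  move=> a b ha hb e; case: (ltngtP a b) => [ab|ba|//].
  - by move: (genx_neq a b); rewrite ab e eqxx => /(_ hb).
  - by move: (genx_neq b a); rewrite ba e eqxx => /(_ ha).
move=> /andP[ab bn]; have an1 : (a < n.-1)%N by lia.
have aN : (a < n.-1 + m)%N by lia.
rewrite /genx an1 (mvarE aN); case: (ltnP b n.-1) => [bn1|n1b].
  have bN : (b < n.-1 + m)%N by lia.
  by rewrite (mvarE bN) tofrac_eq mpolyX_neq // -(inj_eq val_inj) /= neq_ltn ab.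
rewrite -rmorph_prod /=; set P := \prod_(l < n.-1) _; apply/eqP => e.
have P0 : FracField.tofrac P != 0.
  apply: contra_neq (@mpolyX_neq0 int _ (Ordinal aN)) => P0.
  by apply/eqP; rewrite -tofrac_eq0 e P0 invr0.
have : FracField.tofrac ('X_(Ordinal aN) * P) == 1 by rewrite rmorphM /= e mulVf.
by rewrite -tofrac1 tofrac_eq (negPf (mpolyX_mul_neq1 _ _)).
Qed.

Theorem corollary5p3 (n : nat) (hn : (2 <= n)%N) (m i j : nat)
  (hi : (1 <= i <= n)%N) (hj : (1 <= j <= n.-1)%N) :
  sigmaF n m (swapx j (genx n m)) (geny n m) i = sigmaF n m (genx n m) (geny n m) i /\
  tauF n m (swapx j (genx n m)) (geny n m) i = tauF n m (genx n m) (geny n m) i.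
Proof.
case: j hj => [//|s] /andP[_ hs]; have s_lt : (s.+1 < n)%N by lia.
have i_le : (i <= n)%N by case/andP: hi.
have x_inj := genx_inj (m := m) hn.
by split; [apply: sigmaF_swap | apply: tauF_swap].
Qed.
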